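(* Let $m\ge 2$ be even, $n\ge 2$, and let $\mathcal{A}$ be a completely positive tensor of order $m$ and dimension $n$. Then $\mathcal{A}$ is positive definite if and only if $\mathcal{A}$ is strongly completely positive.
   Context: For a vector $\mathbf{u}\in\mathbb{R}^n$, $\mathbf{u}^m$ denotes the symmetric $m$th order $n$-dimensional tensor with entries $u_{i_1}\cdots u_{i_m}$. A symmetric $m$th order $n$-dimensional tensor $\mathcal{A}$ is completely positive if there are nonnegative vectors $\mathbf{u}^{(1)},\dots,\mathbf{u}^{(r)}\in\mathbb{R}^n$ with $\mathcal{A}=(\mathbf{u}^{(1)})^m+\dots+(\mathbf{u}^{(r)})^m$; it is strongly completely positive if such a decomposition exists with $\{\mathbf{u}^{(1)},\dots,\mathbf{u}^{(r)}\}$ spanning $\mathbb{R}^n$. For $m$ even, $\mathcal{A}$ is positive definite if $\mathcal{A}\mathbf{x}^m=\sum_{i_1,\dots,i_m}a_{i_1\dots i_m}x_{i_1}\cdots x_{i_m}>0$ for all nonzero $\mathbf{x}\in\mathbb{R}^n$. *)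

From mathcomp Require Import all_boot all_order all_algebra.
From mathcomp Require Import perm vector.
Set Implicit Arguments. Unset Strict Implicit. Unset Printing Implicit Defensive.
Import Order.TTheory GRing.Theory Num.Theory.
Local Open Scope ring_scope.

Definition tensor (R : realFieldType) (m n : nat) := m.-tuple 'I_n -> R.

Definition symmetric_tensor (R : realFieldType) (m n : nat) (A : tensor R m n) :=
  forall (s : 'S_m) (i : m.-tuple 'I_n),
    A [tuple tnth i (s j) | j < m] = A i.

Definition tpow (R : realFieldType) (m n : nat) (u : 'rV[R]_n) : tensor R m n :=
  fun i => \prod_(j < m) u 0 (tnth i j).

Definition nonneg_vec (R : realFieldType) (n : nat) (u : 'rV[R]_n) :=
  forall j, 0 <= u 0 j.

Definition is_decomp (R : realFieldType) (m n : nat) (A : tensor R m n)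
  (us : seq 'rV[R]_n) :=
  (forall u, u \in us -> nonneg_vec u) /\
  forall i, A i = \sum_(u <- us) @tpow R m n u i.

Definition completely_positive (R : realFieldType) (m n : nat) (A : tensor R m n) :=
  symmetric_tensor A /\ exists us : seq 'rV[R]_n, is_decomp A us.

Definition strongly_completely_positive (R : realFieldType) (m n : nat)
  (A : tensor R m n) :=
  symmetric_tensor A /\
  exists us : seq 'rV[R]_n, is_decomp A us /\ (<<us>>%VS = fullv).

Definition tform (R : realFieldType) (m n : nat) (A : tensor R m n) (x : 'rV[R]_n) : R :=
  \sum_(i : m.-tuple 'I_n) A i * \prod_(j < m) x 0 (tnth i j).

Definition positive_definite (R : realFieldType) (m n : nat) (A : tensor R m n) :=
  forall x : 'rV[R]_n, x != 0 -> 0 < tform A x.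

From mathcomp Require Import all_boot all_order all_algebra.
From mathcomp Require Import perm vector.
Set Implicit Arguments. Unset Strict Implicit. Unset Printing Implicit Defensive.
Import Order.TTheory GRing.Theory Num.Theory.
Local Open Scope ring_scope.

(* For a decomposition A = sum_u u^m one has A x^m = sum_u (u . x)^m, a sum of
   even powers. It vanishes exactly when x is orthogonal to every u, and a
   nonzero vector orthogonal to all the u exists exactly when the u do not
   span R^n (x . x = 0 forces x = 0 over an ordered field). *)

Lemma big_tuple_prod (R : comNzSemiRingType) (I : finType) (m : nat) (g : I -> R) :
  \sum_(t : m.-tuple I) \prod_(j < m) g (tnth t j) = (\sum_i g i) ^+ m.
Proof.
rewrite -[in RHS](card_ord m) -prodr_const bigA_distr_bigA /=.
rewrite (reindex (fun f : {ffun 'I_m -> I} => [tuple f j | j < m])) /=.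
  by apply: eq_bigr => f _; apply: eq_bigr => j _; rewrite tnth_mktuple.
exists (fun t : m.-tuple I => [ffun j => tnth t j]) => [f _|t _].
  by apply/ffunP => j; rewrite ffunE tnth_mktuple.
by apply: eq_from_tnth => j; rewrite tnth_mktuple ffunE.
Qed.

Definition vdot (R : nzRingType) (n : nat) (u x : 'rV[R]_n) : R :=
  \sum_k u 0 k * x 0 k.

Lemma vdot_suml (R : nzRingType) (n p : nat) (c : 'I_p -> R) (v : 'I_p -> 'rV[R]_n)
    (x : 'rV[R]_n) :
  vdot (\sum_i c i *: v i) x = \sum_i c i * vdot (v i) x.
Proof.
rewrite /vdot; under eq_bigr => k _ do rewrite summxE big_distrl /=.
rewrite exchange_big /=; apply: eq_bigr => i _.
by rewrite big_distrr /=; apply: eq_bigr => k _; rewrite mxE mulrA.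
Qed.

Lemma vdotvv_eq0 (R : realDomainType) (n : nat) (x : 'rV[R]_n) :
  (vdot x x == 0) = (x == 0).
Proof.
apply/idP/eqP => [|->]; last by rewrite /vdot big1 // => k _; rewrite mxE mul0r.
rewrite psumr_eq0 => [/allP x0|k _]; last by rewrite -expr2 sqr_ge0.
apply/rowP => k; have /implyP := x0 k (mem_index_enum k).
by rewrite mulf_eq0 orbb mxE => /(_ isT)/eqP.
Qed.

Lemma tform_decomp (R : realFieldType) (m n : nat) (A : tensor R m n)
    (us : seq 'rV[R]_n) (x : 'rV[R]_n) :
  is_decomp A us -> tform A x = \sum_(u <- us) vdot u x ^+ m.
Proof.
move=> [_ Adecomp]; rewrite /tform.
under eq_bigr => i _ do rewrite Adecomp big_distrl /=.
rewrite exchange_big /=; apply: eq_bigr => u _.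
rewrite -big_tuple_prod; apply: eq_bigr => i _.
by rewrite /tpow -big_split.
Qed.

Lemma psumr_even_expr_gt0 (R : realDomainType) (I : eqType) (s : seq I)
    (f : I -> R) (m : nat) :
  (0 < m)%N -> ~~ odd m ->
  (0 < \sum_(i <- s) f i ^+ m) = has (fun i => f i != 0) s.
Proof.
move=> m_gt0 m_even.
have pow_ge0 i : true -> 0 <= f i ^+ m by move=> _; exact: exprn_even_ge0.
rewrite lt0r sumr_ge0 // andbT psumr_neq0 //.
by apply: eq_has => i; rewrite exprn_even_gt0 // eqn0Ngt m_gt0.
Qed.

Lemma positive_definite_decompP (R : realFieldType) (m n : nat) (A : tensor R m n)
    (us : seq 'rV[R]_n) :
  (0 < m)%N -> ~~ odd m -> is_decomp A us ->
  positive_definite A <-> (forall x, x != 0 -> has (fun u => vdot u x != 0) us).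
Proof.
move=> m_gt0 m_even Adecomp.
by split=> PD x /PD; rewrite (tform_decomp x Adecomp) psumr_even_expr_gt0.
Qed.

Section SpanRowVectors.

Variables (F : fieldType) (n : nat) (us : seq 'rV[F]_n).

Let M := \matrix_(i < size us) us`_i.

Lemma span_row_full : row_full M -> <<us>>%VS = fullv.
Proof.
move=> /row_fullP [B BM]; apply/vspaceP => v; rewrite memvf.
have -> : v = (v *m B) *m M by rewrite -mulmxA BM mulmx1.
rewrite mulmx_sum_row; apply: memv_suml => i _; apply: memvZ.
by rewrite rowK; apply/memv_span/mem_nth.
Qed.

Lemma exists_vdot_eq0 :
  ~~ row_full M -> exists2 x : 'rV[F]_n, x != 0 & {in us, forall u, vdot u x = 0}.
Proof.
have -> : row_full M = row_free M^T by rewrite /row_free mxrank_tr.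
rewrite -kermx_eq0 => /rowV0Pn [x /sub_kermxP xM0 x_neq0].
exists x => // u u_us; have u_idx : (index u us < size us)%N by rewrite index_mem.
have := congr1 (fun N : 'M_(1, size us) => N 0 (Ordinal u_idx)) xM0; rewrite !mxE => <-.
by apply: eq_bigr => k _; rewrite !mxE nth_index // mulrC.
Qed.

End SpanRowVectors.

Lemma span_fullP (R : realFieldType) (n : nat) (us : seq 'rV[R]_n) :
  <<us>>%VS = fullv <-> (forall x, x != 0 -> has (fun u => vdot u x != 0) us).
Proof.
split=> [us_full x | us_detect].
  apply: contraR => /hasPn us_orth; rewrite -vdotvv_eq0.
  have x_span : x \in <<in_tuple us>>%VS by rewrite /= us_full memvf.
  rewrite {1}(coord_span x_span) vdot_suml big1 // => i _.
  by have /negPn/eqP -> := us_orth _ (mem_nth 0 (ltn_ord i)); rewrite mulr0.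
apply: span_row_full; apply: contraT.
move=> /exists_vdot_eq0 [x /us_detect /hasP [u u_us u_x] x_orth].
by rewrite x_orth ?eqxx in u_x.
Qed.

Theorem theorem2p2 (R : realFieldType) (m n : nat) (A : tensor R m n) :
  (2 <= m)%N -> ~~ odd m -> (2 <= n)%N ->
  completely_positive A ->
  (positive_definite A <-> strongly_completely_positive A).
Proof.
move=> m_ge2 m_even _ [A_sym [us A_us]].
have m_gt0 : (0 < m)%N by apply: leq_trans m_ge2.
split=> [PD | [_ [vs [A_vs vs_full]]]].
  split=> //; exists us; split=> //.
  by apply/span_fullP/(positive_definite_decompP m_gt0 m_even A_us).
by apply/(positive_definite_decompP m_gt0 m_even A_vs)/span_fullP.
Qed.
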